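(* Let $n\ge3$ and let $W$ be a real $2$-plane in $\mathbb{H}^n$ which is not contained in a quaternion line. Then the orbit $\mathbb{G}\equiv\mathrm{Sp}(n)\cdot\mathrm{Sp}(1)\cdot W$ has the transitivity property.
   Context: $\mathbb{H}^n=\mathbb{R}^{4n}$; $\mathrm{Sp}(n)$ acts by quaternion-linear isometries and $\mathrm{Sp}(1)$ by unit quaternion scalar multiplication. A set $\mathbb{G}$ of real planes has the transitivity property if for any two vectors $x,y\in\mathbb{H}^n$ there exist $W_1,\dots,W_k\in\mathbb{G}$ with $x\in W_1$, $y\in W_k$ and $\dim_{\mathbb{R}}(W_i\cap W_{i+1})>0$ for $i=1,\dots,k-1$. *)

(* H^n is modelled as 'M[R]_(n,4): row i is the i-th
   quaternion coordinate (a0,a1,a2,a3) = a0 + a1 i + a2 j + a3 k. *)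
From HB Require Import structures.
From mathcomp Require Import all_boot all_order all_algebra.
From mathcomp Require Import reals.
Set Implicit Arguments. Unset Strict Implicit. Unset Printing Implicit Defensive.
Import Order.TTheory GRing.Theory Num.Theory.
Local Open Scope ring_scope.

Section Quat.
Variable R : realType.

Definition qc (a : 'rV[R]_4) (k : nat) : R := a 0 (inord k).

Definition qmul (a b : 'rV[R]_4) : 'rV[R]_4 :=
  \row_(j < 4)
    match val j with
    | 0 => qc a 0 * qc b 0 - qc a 1 * qc b 1 - qc a 2 * qc b 2 - qc a 3 * qc b 3
    | 1 => qc a 0 * qc b 1 + qc a 1 * qc b 0 + qc a 2 * qc b 3 - qc a 3 * qc b 2
    | 2 => qc a 0 * qc b 2 - qc a 1 * qc b 3 + qc a 2 * qc b 0 + qc a 3 * qc b 1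
    | _ => qc a 0 * qc b 3 + qc a 1 * qc b 2 - qc a 2 * qc b 1 + qc a 3 * qc b 0
    end.

Definition rsc n (x : 'M[R]_(n, 4)) (q : 'rV[R]_4) : 'M[R]_(n, 4) :=
  \matrix_(i, j) (qmul (row i x) q) 0 j.

Definition sqnorm n (x : 'M[R]_(n, 4)) : R := \sum_i \sum_j x i j ^+ 2.

(* Sp(n): quaternion-linear (commuting with right scalar multiplication)
   additive maps preserving the Euclidean norm *)
Definition is_Sp n (A : 'M[R]_(n, 4) -> 'M[R]_(n, 4)) : Prop :=
  (forall x y, A (x + y) = A x + A y) /\
  (forall x q, A (rsc x q) = rsc (A x) q) /\
  (forall x, sqnorm (A x) = sqnorm x).

Definition real_plane n (W : {vspace 'M[R]_(n, 4)}) : Prop := \dim W = 2%N.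

Definition in_quat_line n (W : {vspace 'M[R]_(n, 4)}) : Prop :=
  exists u : 'M[R]_(n, 4), u != 0 /\
    forall w, w \in W -> exists q : 'rV[R]_4, w = rsc u q.

Definition in_SpSp1_orbit n (W W' : {vspace 'M[R]_(n, 4)}) : Prop :=
  exists (A : 'M[R]_(n, 4) -> 'M[R]_(n, 4)) (q : 'rV[R]_4),
    is_Sp A /\ sqnorm q = 1 /\
    forall v, v \in W' <-> exists2 w, w \in W & v = A (rsc w q).

Definition transitivity_property n (G : {vspace 'M[R]_(n, 4)} -> Prop) : Prop :=
  forall x y : 'M[R]_(n, 4),
    exists (k : nat) (Ws : nat -> {vspace 'M[R]_(n, 4)}),
      (forall i, (i <= k)%N -> G (Ws i)) /\
      x \in Ws 0%N /\ y \in Ws k /\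
      (forall i, (i < k)%N -> (0 < \dim (Ws i :&: Ws i.+1)%VS)%N).

End Quat.

(* Pick a, b in W with |a| = |b| = 1 and Re <a, b> = 0, and put tau = <a, b>.
   Then |tau| < 1 precisely because W does not lie in a quaternion line.
   Since Sp(n) is transitive on pairs of vectors with a given hermitian Gram
   matrix, span(x, w) lies in the orbit whenever |x| = |w| = 1 and <x, w> = tau.  Two unit vectors x, z with <x, z> = rho
   real and |tau| <= rho then lie in two orbit planes sharing a nonzero vector,
   built from a third direction orthogonal to both (here n >= 3 is used).
   Cutting the quarter circle from x to an orthogonal e into short enough arcs
   links x to e, and any two vectors are orthogonal to a common e. *)
From HB Require Import structures.
From mathcomp Require Import all_boot all_order all_algebra.
From mathcomp Require Import reals ring lra zify.
Set Implicit Arguments. Unset Strict Implicit. Unset Printing Implicit Defensive.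
Import Order.TTheory GRing.Theory Num.Theory.
Local Open Scope ring_scope.

Section Quaternions.
Variable R : realType.

Definition quat := 'rV[R]_4.
HB.instance Definition _ := GRing.Lmodule.on quat.

Definition qone : quat := \row_(j < 4) (j == 0 :> nat)%:R.

Lemma quatP (a b : quat) : qc a 0 = qc b 0 -> qc a 1 = qc b 1 ->
  qc a 2 = qc b 2 -> qc a 3 = qc b 3 -> a = b.
Proof.
move=> h0 h1 h2 h3; apply/rowP => j; rewrite -[j]inord_val.
by case: j => [[|[|[|[|k]]]] hk].
Qed.

Lemma qcM0 (a b : quat) : qc (qmul a b) 0 =
  qc a 0 * qc b 0 - qc a 1 * qc b 1 - qc a 2 * qc b 2 - qc a 3 * qc b 3.
Proof. by rewrite {1}/qc mxE /= inordK. Qed.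
Lemma qcM1 (a b : quat) : qc (qmul a b) 1 =
  qc a 0 * qc b 1 + qc a 1 * qc b 0 + qc a 2 * qc b 3 - qc a 3 * qc b 2.
Proof. by rewrite {1}/qc mxE /= inordK. Qed.
Lemma qcM2 (a b : quat) : qc (qmul a b) 2 =
  qc a 0 * qc b 2 - qc a 1 * qc b 3 + qc a 2 * qc b 0 + qc a 3 * qc b 1.
Proof. by rewrite {1}/qc mxE /= inordK. Qed.
Lemma qcM3 (a b : quat) : qc (qmul a b) 3 =
  qc a 0 * qc b 3 + qc a 1 * qc b 2 - qc a 2 * qc b 1 + qc a 3 * qc b 0.
Proof. by rewrite {1}/qc mxE /= inordK. Qed.

Lemma qcD (a b : quat) k : qc (a + b) k = qc a k + qc b k.
Proof. by rewrite /qc mxE. Qed.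
Lemma qcN (a : quat) k : qc (- a) k = - qc a k.
Proof. by rewrite /qc mxE. Qed.
Lemma qcZ c (a : quat) k : qc (c *: a) k = c * qc a k.
Proof. by rewrite /qc mxE. Qed.
Lemma qc0 k : qc (0 : quat) k = 0.
Proof. by rewrite /qc mxE. Qed.
Lemma qc_one k : (k < 4)%N -> qc qone k = (k == 0)%:R.
Proof. by move=> hk; rewrite /qc mxE /= inordK. Qed.

Definition qconj (a : quat) : quat := locked ((qc a 0 *+ 2) *: qone - a).
Definition qRe (a : quat) : R := qc a 0.
Definition qnorm (a : quat) : R :=
  qc a 0 ^+ 2 + qc a 1 ^+ 2 + qc a 2 ^+ 2 + qc a 3 ^+ 2.

Lemma qc_conj (a : quat) k :
  (k < 4)%N -> qc (qconj a) k = (if k == 0%N then 1 else -1) * qc a k.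
Proof.
by move=> hk; rewrite /qconj -lock qcD qcN qcZ qc_one //; case: k hk => [|k] _ /=; ring.
Qed.

Definition qcE := (qcM0, qcM1, qcM2, qcM3, qcD, qcN, qcZ, qc0, qc_one, qc_conj).

Ltac quat_ring := apply: quatP; rewrite ?qcE //=; ring.

Lemma qmulA : associative (@qmul R). Proof. by move=> a b c; quat_ring. Qed.
Lemma qmul1 : left_id qone (@qmul R). Proof. by move=> a; quat_ring. Qed.
Lemma qmulr1 : right_id qone (@qmul R). Proof. by move=> a; quat_ring. Qed.
Lemma qmulDl : left_distributive (@qmul R) +%R. Proof. by move=> a b c; quat_ring. Qed.
Lemma qmulDr : right_distributive (@qmul R) +%R. Proof. by move=> a b c; quat_ring. Qed.
Lemma qone_neq0 : qone != 0.
Proof.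
by apply/eqP => /(congr1 (fun a => qc a 0)); rewrite qc_one // qc0; apply/eqP/oner_neq0.
Qed.

HB.instance Definition _ :=
  GRing.Zmodule_isNzRing.Build quat qmulA qmul1 qmulr1 qmulDl qmulDr qone_neq0.

Lemma qscalerAl (c : R) (u v : quat) : c *: (u * v) = (c *: u) * v.
Proof. quat_ring. Qed.
HB.instance Definition _ := GRing.Lmodule_isLalgebra.Build R quat qscalerAl.
Lemma qscalerAr (c : R) (u v : quat) : c *: (u * v) = u * (c *: v).
Proof. quat_ring. Qed.
HB.instance Definition _ := GRing.Lalgebra_isAlgebra.Build R quat qscalerAr.

Lemma qconjM (a b : quat) : qconj (a * b) = qconj b * qconj a. Proof. quat_ring. Qed.
Lemma qconjD (a b : quat) : qconj (a + b) = qconj a + qconj b. Proof. quat_ring. Qed.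
Lemma qconjN (a : quat) : qconj (- a) = - qconj a. Proof. quat_ring. Qed.
Lemma qconjZ c (a : quat) : qconj (c *: a) = c *: qconj a. Proof. quat_ring. Qed.
Lemma qconjK (a : quat) : qconj (qconj a) = a. Proof. quat_ring. Qed.
Lemma qconj0 : qconj 0 = 0. Proof. quat_ring. Qed.
Lemma qconj_alg c : qconj c%:A = c%:A. Proof. quat_ring. Qed.
Lemma qmul_conj (a : quat) : a * qconj a = (qnorm a)%:A.
Proof. rewrite /qnorm; quat_ring. Qed.
Lemma qconj_mul (a : quat) : qconj a * a = (qnorm a)%:A.
Proof. rewrite /qnorm; quat_ring. Qed.

Lemma qReD a b : qRe (a + b) = qRe a + qRe b. Proof. exact: qcD. Qed.
Lemma qReN a : qRe (- a) = - qRe a. Proof. exact: qcN. Qed.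
Lemma qReB a b : qRe (a - b) = qRe a - qRe b. Proof. by rewrite qReD qReN. Qed.
Lemma qReZ c a : qRe (c *: a) = c * qRe a. Proof. exact: qcZ. Qed.
Lemma qRe_alg c : qRe c%:A = c. Proof. by rewrite /qRe qcZ qc_one // mulr1. Qed.
Lemma qRe0 : qRe 0 = 0. Proof. exact: qc0. Qed.
Lemma qRe1 : qRe 1 = 1. Proof. exact: qc_one. Qed.
Lemma qReC (a b : quat) : qRe (a * b) = qRe (b * a). Proof. by rewrite /qRe !qcM0; ring. Qed.
Lemma qRe_conj a : qRe (qconj a) = qRe a. Proof. by rewrite /qRe qc_conj // mul1r. Qed.

Lemma qnormM (a b : quat) : qnorm (a * b) = qnorm a * qnorm b.
Proof. by rewrite /qnorm !qcE; ring. Qed.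
Lemma qnormZ c a : qnorm (c *: a) = c ^+ 2 * qnorm a.
Proof. by rewrite /qnorm !qcZ; ring. Qed.
Lemma qnorm_conj a : qnorm (qconj a) = qnorm a.
Proof. by rewrite /qnorm !qc_conj //=; ring. Qed.
Lemma qnorm1 : qnorm 1 = 1.
Proof. by rewrite /qnorm !qc_one //=; ring. Qed.
Lemma qnorm_ge0 a : 0 <= qnorm a.
Proof. rewrite /qnorm; nra. Qed.
Lemma qRe_sqr_le a : qRe a ^+ 2 <= qnorm a.
Proof. rewrite /qnorm /qRe; nra. Qed.
Lemma qnorm_eq0 a : qnorm a = 0 -> a = 0.
Proof. by rewrite /qnorm => h; apply: quatP; rewrite qc0; nra. Qed.

Lemma qRe_mul_eq0 (h : quat) : (forall p, qRe (h * p) = 0) -> h = 0.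
Proof. by move=> H; apply: qnorm_eq0; rewrite -(qRe_alg (qnorm h)) -qmul_conj. Qed.

End Quaternions.

Section Hn.
Variables (R : realType) (n : nat).
Local Notation V := 'M[R]_(n, 4).
Local Notation quat := (quat R).
Implicit Types (x y u v w : V) (p q : quat) (c : R).

Definition rowq x i : quat := row i x.

Definition herm u v : quat := \sum_i qconj (rowq u i) * rowq v i.

Lemma mx_rowqP x y : (forall i, rowq x i = rowq y i) -> x = y.
Proof. by move=> h; apply/row_matrixP. Qed.
Lemma rowqD x y i : rowq (x + y) i = rowq x i + rowq y i.
Proof. by apply/rowP => j; rewrite /rowq !mxE. Qed.
Lemma rowqN x i : rowq (- x) i = - rowq x i.
Proof. by apply/rowP => j; rewrite /rowq !mxE. Qed.
Lemma rowqZ c x i : rowq (c *: x) i = c *: rowq x i.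
Proof. by apply/rowP => j; rewrite /rowq !mxE. Qed.
Lemma rowq0 i : rowq 0 i = 0.
Proof. by apply/rowP => j; rewrite /rowq !mxE. Qed.
Lemma rowq_rsc x q i : rowq (rsc x q) i = rowq x i * q.
Proof. by apply/rowP => j; rewrite /rowq /rsc !mxE. Qed.

Lemma sqnormE x : sqnorm x = \sum_i qnorm (rowq x i).
Proof.
apply: eq_bigr => i _; rewrite !big_ord_recl big_ord0 addr0 /qnorm /qc /rowq !mxE !addrA.
congr (_ ^+ 2 + _ ^+ 2 + _ ^+ 2 + _ ^+ 2); congr (x i).
all: by apply/val_inj; rewrite /= inordK.
Qed.

Lemma rscD x y q : rsc (x + y) q = rsc x q + rsc y q.
Proof. by apply: mx_rowqP => i; rewrite !(rowqD, rowq_rsc) mulrDl. Qed.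
Lemma rscN x q : rsc (- x) q = - rsc x q.
Proof. by apply: mx_rowqP => i; rewrite !(rowqN, rowq_rsc) mulNr. Qed.
Lemma rscB x y q : rsc (x - y) q = rsc x q - rsc y q.
Proof. by rewrite rscD rscN. Qed.
Lemma rscDr x p q : rsc x (p + q) = rsc x p + rsc x q.
Proof. by apply: mx_rowqP => i; rewrite !(rowqD, rowq_rsc) mulrDr. Qed.
Lemma rscZr c x q : rsc x (c *: q) = c *: rsc x q.
Proof. by apply: mx_rowqP => i; rewrite !(rowqZ, rowq_rsc) scalerAr. Qed.
Lemma rscM x p q : rsc (rsc x p) q = rsc x (p * q).
Proof. by apply: mx_rowqP => i; rewrite !rowq_rsc mulrA. Qed.
Lemma rsc1 x : rsc x (1 : quat) = x.
Proof. by apply: mx_rowqP => i; rewrite rowq_rsc mulr1. Qed.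
Lemma rsc_alg x c : rsc x (c%:A : quat) = c *: x.
Proof. by apply: mx_rowqP => i; rewrite rowqZ rowq_rsc mulr_algr. Qed.
Lemma rscr0 x : rsc x (0 : quat) = 0.
Proof. by apply: mx_rowqP => i; rewrite rowq0 rowq_rsc mulr0. Qed.

Lemma hermDl u v w : herm (u + v) w = herm u w + herm v w.
Proof. by rewrite -big_split; apply: eq_bigr => i _; rewrite rowqD qconjD mulrDl. Qed.
Lemma hermDr u v w : herm u (v + w) = herm u v + herm u w.
Proof. by rewrite -big_split; apply: eq_bigr => i _; rewrite rowqD mulrDr. Qed.
Lemma hermNl u v : herm (- u) v = - herm u v.
Proof. by rewrite -sumrN; apply: eq_bigr => i _; rewrite rowqN qconjN mulNr. Qed.
Lemma hermNr u v : herm u (- v) = - herm u v.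
Proof. by rewrite -sumrN; apply: eq_bigr => i _; rewrite rowqN mulrN. Qed.
Lemma hermBl u v w : herm (u - v) w = herm u w - herm v w.
Proof. by rewrite hermDl hermNl. Qed.
Lemma hermBr u v w : herm u (v - w) = herm u v - herm u w.
Proof. by rewrite hermDr hermNr. Qed.
Lemma hermZl c u v : herm (c *: u) v = c *: herm u v.
Proof. by rewrite scaler_sumr; apply: eq_bigr => i _; rewrite rowqZ qconjZ scalerAl. Qed.
Lemma hermZr c u v : herm u (c *: v) = c *: herm u v.
Proof. by rewrite scaler_sumr; apply: eq_bigr => i _; rewrite rowqZ scalerAr. Qed.
Lemma herm0r u : herm u 0 = 0.
Proof. by rewrite /herm big1 // => i _; rewrite rowq0 mulr0. Qed.
Lemma herm_rscl u v q : herm (rsc u q) v = qconj q * herm u v.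
Proof. by rewrite mulr_sumr; apply: eq_bigr => i _; rewrite rowq_rsc qconjM mulrA. Qed.
Lemma herm_rscr u v q : herm u (rsc v q) = herm u v * q.
Proof. by rewrite mulr_suml; apply: eq_bigr => i _; rewrite rowq_rsc mulrA. Qed.
Lemma herm_sym u v : herm v u = qconj (herm u v).
Proof.
rewrite /herm; elim/big_rec2: _ => [|i y1 y2 _ ->]; first by rewrite qconj0.
by rewrite qconjD qconjM qconjK.
Qed.
Lemma herm_sym0 u v : herm u v = 0 -> herm v u = 0.
Proof. by move=> h; rewrite herm_sym h qconj0. Qed.
Lemma herm_self u : herm u u = (sqnorm u)%:A.
Proof. by rewrite sqnormE scaler_suml; apply: eq_bigr => i _; apply: qconj_mul. Qed.

Lemma sqnorm_ge0 u : 0 <= sqnorm u.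
Proof. by rewrite sqnormE sumr_ge0 // => i _; apply: qnorm_ge0. Qed.
Lemma sqnorm_eq0 u : (sqnorm u == 0) = (u == 0).
Proof.
apply/idP/eqP => [|->].
  2: by apply/eqP; rewrite sqnormE big1 // => i _; rewrite rowq0 /qnorm !qc0; ring.
rewrite sqnormE psumr_eq0 => [/allP h|i _]; last exact: qnorm_ge0.
by apply: mx_rowqP => i; rewrite rowq0; apply/qnorm_eq0/eqP/h; rewrite mem_index_enum.
Qed.
Lemma sqnorm_gt0 u : (0 < sqnorm u) = (u != 0).
Proof. by rewrite lt_def sqnorm_ge0 sqnorm_eq0 andbT. Qed.
Lemma sqnormE_herm u : sqnorm u = qRe (herm u u).
Proof. by rewrite herm_self qRe_alg. Qed.
Lemma sqnormD u v : sqnorm (u + v) = sqnorm u + sqnorm v + 2 * qRe (herm u v).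
Proof. by rewrite !sqnormE_herm hermDl !hermDr (herm_sym u v) !qReD qRe_conj; ring. Qed.
Lemma sqnormB u v : sqnorm (u - v) = sqnorm u + sqnorm v - 2 * qRe (herm u v).
Proof. by rewrite sqnormD !sqnormE_herm hermNl hermNr opprK hermNr qReN; ring. Qed.
Lemma sqnormZ c u : sqnorm (c *: u) = c ^+ 2 * sqnorm u.
Proof. by rewrite !sqnormE_herm hermZl hermZr !qReZ; ring. Qed.
Lemma sqnorm_rsc u q : sqnorm (rsc u q) = sqnorm u * qnorm q.
Proof.
rewrite !sqnormE_herm herm_rscl herm_rscr herm_self mulr_algl -scalerAr qconj_mul.
by rewrite qReZ !qRe_alg.
Qed.

Lemma herm_unit u : sqnorm u = 1 -> herm u u = 1.
Proof. by move=> h; rewrite herm_self h scale1r. Qed.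

Lemma herm_sub_rsc a b : sqnorm a = 1 -> herm a (b - rsc a (herm a b)) = 0.
Proof. by move=> a1; rewrite hermBr herm_rscr herm_unit // mul1r subrr. Qed.

Lemma sqnorm_sub_rsc a b :
  sqnorm a = 1 -> sqnorm (b - rsc a (herm a b)) = sqnorm b - qnorm (herm a b).
Proof.
move=> a1; rewrite sqnormB sqnorm_rsc a1 herm_rscr (herm_sym a b) qconj_mul qRe_alg; ring.
Qed.

End Hn.

Lemma sqnorm_quat (R : realType) (q : quat R) : sqnorm q = qnorm q.
Proof. by rewrite sqnormE big_ord1; congr qnorm; apply/rowP => j; rewrite !mxE. Qed.

Definition linear_fun (K : fieldType) (U V : lmodType K) (f : U -> V) (hf : linear f)
  : {linear U -> V} := HB.pack f (GRing.isLinear.Build K U V *:%R f hf).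

Section Sp.
Variables (R : realType) (n : nat).
Local Notation V := 'M[R]_(n, 4).
Local Notation quat := (quat R).
Implicit Types (x y u v w z : V) (p q : quat) (c : R) (A : V -> V).

Lemma Sp_comp A B : is_Sp A -> is_Sp B -> is_Sp (A \o B).
Proof.
move=> [A1 [A2 A3]] [B1 [B2 B3]]; split; [|split] => /=.
- by move=> x y; rewrite B1 A1.
- by move=> x q; rewrite B2 A2.
- by move=> x; rewrite A3 B3.
Qed.

Lemma SpZ A c x : is_Sp A -> A (c *: x) = c *: A x.
Proof. by move=> hA; rewrite -(rsc_alg x) -(rsc_alg (A x)) hA.2.1. Qed.

Lemma Sp_linear A : is_Sp A -> linear A.
Proof. by move=> hA c u v; rewrite hA.1 SpZ. Qed.

Definition Sp_lfun A (hA : is_Sp A) : 'End(V) := linfun (linear_fun (Sp_linear hA)).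

Lemma Sp_lfunE A (hA : is_Sp A) x : Sp_lfun hA x = A x.
Proof. by rewrite lfunE. Qed.

(* Polarization recovers the real part of [herm] from the norm, and
   quaternion-linearity then recovers all of it. *)
Lemma Sp_herm A u v : is_Sp A -> herm (A u) (A v) = herm u v.
Proof.
move=> hA; have hRe u' v' : qRe (herm (A u') (A v')) = qRe (herm u' v').
  by have := hA.2.2 (u' + v'); rewrite hA.1 !sqnormD !hA.2.2; lra.
apply/eqP; rewrite -subr_eq0; apply/eqP/qRe_mul_eq0 => p.
by rewrite mulrBl -!herm_rscr -hA.2.1 qReB hRe subrr.
Qed.

Definition qreflect u (b : quat) v : V := v - rsc u (b * herm u v).

Lemma qreflect_Sp u b : sqnorm u * qnorm b = 2 * qRe b -> is_Sp (qreflect u b).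
Proof.
move=> hb; split; [|split] => [x y|x q|x]; rewrite /qreflect.
- by rewrite hermDr mulrDr rscDr opprD addrACA.
- by rewrite herm_rscr rscB rscM mulrA.
rewrite sqnormB sqnorm_rsc herm_rscr (herm_sym u x) qReC -mulrA qmul_conj mulr_algr.
by rewrite qReZ qnormM mulrA hb; ring.
Qed.

Lemma Sp_reflect_to y w : sqnorm y = sqnorm w ->
  exists g, [/\ is_Sp g, g y = w & forall z, herm (y - w) z = 0 -> g z = z].
Proof.
move=> hyw; have [<-|hne] := eqVneq y w; first by exists id.
set u := y - w; set h := herm u y.
have hu : 0 < sqnorm u by rewrite sqnorm_gt0 subr_eq0.
have hRe : 2 * qRe h = sqnorm u.
  by rewrite /h /u hermBl qReB (herm_sym y w) qRe_conj -sqnormE_herm sqnormB; lra.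
have hh : 0 < qnorm h by have := qRe_sqr_le h; nra.
(* [b = <u, y>^-1] makes the reflection send [y] to [y - u = w]. *)
set b := (qnorm h)^-1 *: qconj h.
have hbh : b * h = 1 by rewrite -scalerAl qconj_mul scalerA mulVf ?gt_eqF // scale1r.
exists (qreflect u b); split.
- apply: qreflect_Sp; rewrite qnormZ qnorm_conj qReZ qRe_conj -hRe.
  by field; rewrite gt_eqF.
- by rewrite /qreflect -/h hbh rsc1 /u opprB addrC subrK.
- by move=> z hz; rewrite /qreflect hz mulr0 rscr0 subr0.
Qed.

Lemma Sp_orthogonal_pair (a c x v : V) :
  sqnorm a = sqnorm x -> sqnorm c = sqnorm v -> herm a c = 0 -> herm x v = 0 ->
  exists g, [/\ is_Sp g, g a = x & g c = v].
Proof.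
move=> hax hcv hac hxv.
have [g1 [hg1 g1a _]] := Sp_reflect_to hax.
have hc1 : sqnorm (g1 c) = sqnorm v by rewrite hg1.2.2.
have [g2 [hg2 g2c g2fix]] := Sp_reflect_to hc1.
exists (g2 \o g1); split => /=; [exact: Sp_comp | | by []].
rewrite g1a g2fix // hermBl (herm_sym0 hxv) subr0.
by rewrite (herm_sym x) -g1a Sp_herm // hac qconj0.
Qed.

Lemma Sp_transitive_pairs a b x w : sqnorm a = 1 -> sqnorm x = 1 ->
  sqnorm b = sqnorm w -> herm a b = herm x w ->
  exists g, [/\ is_Sp g, g a = x & g b = w].
Proof.
move=> a1 x1 hbw habxw.
have [g [hg ga gc]] : exists g,
    [/\ is_Sp g, g a = x & g (b - rsc a (herm a b)) = w - rsc x (herm x w)].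
  apply: Sp_orthogonal_pair; rewrite ?herm_sub_rsc //; first by rewrite a1 x1.
  by rewrite !sqnorm_sub_rsc // hbw habxw.
exists g; split => //.
have -> : b = (b - rsc a (herm a b)) + rsc a (herm a b) by rewrite subrK.
by rewrite hg.1 gc hg.2.1 ga habxw subrK.
Qed.

End Sp.

Section Linked.
Variables (R : realType) (n : nat) (W : {vspace 'M[R]_(n, 4)}).
Local Notation V := 'M[R]_(n, 4).
Implicit Types (x y z u : V) (P Q : {vspace V}).

Definition linked x y := exists (k : nat) (Ws : nat -> {vspace V}),
  (forall i, (i <= k)%N -> in_SpSp1_orbit W (Ws i)) /\
  x \in Ws 0%N /\ y \in Ws k /\
  (forall i, (i < k)%N -> (0 < \dim (Ws i :&: Ws i.+1)%VS)%N).

Lemma orbit_Sp_image A (hA : is_Sp A) : in_SpSp1_orbit W (Sp_lfun hA @: W)%VS.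
Proof.
exists A, (1 : quat R); split => //; split.
  by rewrite sqnorm_quat qnorm1.
move=> v; split => [/memv_imgP[w hw ->]|[w hw ->]]; rewrite ?rsc1.
  by exists w; rewrite ?Sp_lfunE ?rsc1.
by rewrite -(Sp_lfunE hA) memv_img.
Qed.

Lemma Sp_image_mem A (hA : is_Sp A) w : w \in W -> A w \in (Sp_lfun hA @: W)%VS.
Proof. by rewrite -(Sp_lfunE hA); apply: memv_img. Qed.

Lemma linked_plane P x y : in_SpSp1_orbit W P -> x \in P -> y \in P -> linked x y.
Proof. by move=> hP hx hy; exists 0%N, (fun _ => P). Qed.

Lemma linked_trans y x z : y != 0 -> linked x y -> linked y z -> linked x z.
Proof.
move=> hy [k1 [W1 [G1 [x1 [y1 I1]]]]] [k2 [W2 [G2 [y2 [z2 I2]]]]].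
exists (k1 + k2.+1)%N, (fun i => if (i <= k1)%N then W1 i else W2 (i - k1.+1)%N).
split; [|split; [by []|split]].
- by move=> i hi; case: ifP => h; [apply: G1 | apply: G2; lia].
- have -> : (k1 + k2.+1 <= k1)%N = false by lia.
  by have -> : (k1 + k2.+1 - k1.+1)%N = k2 by lia.
move=> i hi /=; have [hik|hik] := ltnP i k1.
  by rewrite (ltnW hik) ?hik; apply: I1.
have [->|hne] := eqVneq i k1.
  rewrite leqnn subnn; apply: leq_trans (dimvS (_ : <[y]> <= _)%VS).
    by rewrite dim_vline hy.
  by rewrite -memvE memv_cap y1 y2.
rewrite ifF; last lia.
have -> : (i.+1 - k1.+1)%N = (i - k1.+1).+1 by lia.
by apply: I2; lia.
Qed.

Lemma linked_scale c d x y : linked x y -> linked (c *: x) (d *: y).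
Proof. by move=> [k [Ws [hG [hx [hy hI]]]]]; exists k, Ws; rewrite !memvZ. Qed.

Lemma linked_0l x y : linked x y -> linked 0 y.
Proof. by move=> [k [Ws [hG [_ hy]]]]; exists k, Ws; rewrite mem0v. Qed.

Lemma linked_0r x y : linked x y -> linked x 0.
Proof. by move=> [k [Ws [hG [hx [_ hI]]]]]; exists k, Ws; rewrite mem0v. Qed.

Lemma linked_path (y : nat -> V) m : (0 < m)%N ->
  (forall k, (0 < k < m)%N -> y k != 0) ->
  (forall k, (k < m)%N -> linked (y k) (y k.+1)) -> linked (y 0%N) (y m).
Proof.
elim: m => [//|[|m] IH] _ hy hl; first exact: hl.
apply: (linked_trans (y := y m.+1)); first by apply: hy; lia.
  by apply: IH => // k hk; [apply: hy | apply: hl]; lia.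
exact: hl.
Qed.

End Linked.

Section Orthogonal.
Variables (R : realType) (n : nat).
Local Notation V := 'M[R]_(n, 4).
Implicit Types (x y : V).

Lemma sqnorm_sqrt x : x != 0 -> exists2 s : R, 0 < s & sqnorm x = s ^+ 2.
Proof.
move=> hx; exists (Num.sqrt (sqnorm x)); first by rewrite sqrtr_gt0 sqnorm_gt0.
by rewrite sqr_sqrtr // sqnorm_ge0.
Qed.

Lemma sqnorm_unitZ x (s : R) : sqnorm x = s ^+ 2 -> s != 0 -> sqnorm (s^-1 *: x) = 1.
Proof. by move=> hx hs; rewrite sqnormZ hx exprVn mulVf // expf_neq0. Qed.

(* The kernel of [v |-> (<x, v>, <y, v>)] into [H^2] is nonzero as soon as [4n > 8]. *)
Lemma exists_unit_orthogonal x y : (3 <= n)%N ->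
  exists e, [/\ sqnorm e = 1, herm x e = 0 & herm y e = 0].
Proof.
move=> hn; have [e e0 [hx hy]] : exists2 e : V, e != 0 & herm x e = 0 /\ herm y e = 0.
  pose L v : 'M[R]_(1 + 1, 4) := col_mx (herm x v) (herm y v).
  have hL : linear L.
    by move=> c u v; rewrite /L !hermDr !hermZr scale_col_mx add_col_mx.
  pose f := linfun (linear_fun hL).
  have hker : lker f != 0%VS.
    rewrite -dimv_eq0; have := limg_ker_dim f fullv; rewrite capfv dimvf /dim /=.
    by have := dimvS (subvf (f @: fullv)); rewrite dimvf /dim /=; lia.
  exists (vpick (lker f)); first by rewrite vpick0.
  have : f (vpick (lker f)) == 0 by rewrite -memv_ker memv_pick.
  by rewrite lfunE /= /L col_mx_eq0 => /andP[/eqP -> /eqP ->].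
have [s s0 hs] := sqnorm_sqrt e0.
exists (s^-1 *: e); split; first exact: sqnorm_unitZ hs (lt0r_neq0 s0).
  by rewrite hermZr hx scaler0.
by rewrite hermZr hy scaler0.
Qed.

End Orthogonal.

(* [(p, q) -> (p - 1, q + 1)] is one step of the chain in [linked_orthonormal]. *)
Lemma chain_step_bound (R : realFieldType) (t p q M : R) :
  0 <= t -> 1 <= p -> 0 <= q -> p + q = M -> 4 <= M -> 16 <= (1 - t) * M ->
  0 < p * (p - 1) + q * (q + 1) /\
  t * ((p ^+ 2 + q ^+ 2) * ((p - 1) ^+ 2 + (q + 1) ^+ 2)) <=
    (p * (p - 1) + q * (q + 1)) ^+ 2.
Proof.
move=> t0 p1 q0 hpq hM ht; set D := p * (p - 1) + q * (q + 1).
have hD : M ^+ 2 <= 4 * D.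
  have g1 : 0 <= M * (M - 4) by apply: mulr_ge0; lra.
  have g2 := sqr_ge0 (p - q).
  rewrite /D -hpq in g1 *; nra.
have hD0 : 0 < D by nra.
split=> //.
have -> : (p ^+ 2 + q ^+ 2) * ((p - 1) ^+ 2 + (q + 1) ^+ 2) = D ^+ 2 + M ^+ 2.
  by rewrite /D -hpq; ring.
have h1 : M ^+ 2 <= 4 * M * D by nra.
have h2 : 16 * D <= (1 - t) * M * D by nra.
nra.
Qed.

Section Core.
Variables (R : realType) (n : nat) (W : {vspace 'M[R]_(n, 4)}) (a b : 'M[R]_(n, 4)).
Local Notation V := 'M[R]_(n, 4).
Local Notation tau := (herm a b).
Local Notation t2 := (qnorm (herm a b)).
Hypotheses (hn : (3 <= n)%N) (aW : a \in W) (bW : b \in W)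
  (a1 : sqnorm a = 1) (b1 : sqnorm b = 1).
Implicit Types (x y z w e : V).

Lemma orbit_plane_through x w : sqnorm x = 1 -> sqnorm w = 1 -> herm x w = tau ->
  exists2 P, in_SpSp1_orbit W P & x \in P /\ w \in P.
Proof.
move=> x1 w1 hxw.
have [g [hg <- <-]] := Sp_transitive_pairs a1 x1 (etrans b1 (esym w1)) (esym hxw).
by exists (Sp_lfun hg @: W)%VS; [apply: orbit_Sp_image | rewrite !Sp_image_mem].
Qed.

Hypothesis hab : qRe tau = 0.

(* Both planes contain [u = z + x tau + C e]: one is spanned by [x] and
   [u - rho x], the other by [z] and [(u - z) / rho]. *)
Lemma linked_unit_real x z (rho : R) : sqnorm x = 1 -> sqnorm z = 1 ->
  herm x z = rho%:A -> 0 < rho -> t2 <= rho ^+ 2 -> linked W x z.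
Proof.
move=> x1 z1 hxz rho0 ht.
have [e [e1 hxe hze]] := exists_unit_orthogonal x z hn.
set C := Num.sqrt (rho ^+ 2 - t2); pose f : V := rsc x tau + C *: e.
have hzx : herm z x = rho%:A by rewrite herm_sym hxz qconj_alg.
have hxf : herm x f = tau.
  by rewrite hermDr herm_rscr herm_unit // mul1r hermZr hxe scaler0 addr0.
have hzf : herm z f = rho *: tau.
  by rewrite hermDr herm_rscr hzx mulr_algl hermZr hze scaler0 addr0.
have hff : sqnorm f = rho ^+ 2.
  rewrite sqnormD sqnorm_rsc sqnormZ x1 e1 hermZr herm_rscl hxe mulr0 scaler0 qRe0.
  by rewrite sqr_sqrtr ?subr_ge0 //; ring.
have hw1 : sqnorm (z - rho *: x + f) = 1.
  rewrite sqnormD sqnormB sqnormZ z1 x1 hff hermZr hzx qReZ qRe_alg.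
  by rewrite hermBl hzf hermZl hxf subrr qRe0; ring.
have hxw1 : herm x (z - rho *: x + f) = tau.
  by rewrite hermDr hermBr hermZr hxz herm_unit // hxf subrr add0r.
have hw2 : sqnorm (rho^-1 *: f) = 1 by apply: sqnorm_unitZ hff (lt0r_neq0 rho0).
have hzw2 : herm z (rho^-1 *: f) = tau.
  by rewrite hermZr hzf scalerA mulVf ?lt0r_neq0 // scale1r.
have [P oP [xP w1P]] := orbit_plane_through x1 hw1 hxw1.
have [Q oQ [zQ w2Q]] := orbit_plane_through z1 hw2 hzw2.
have uP : z + f \in P.
  by rewrite -(subrK (rho *: x) z) -addrA (addrC (rho *: x)) addrA memvD // memvZ.
have uQ : z + f \in Q by rewrite -(scalerKV (lt0r_neq0 rho0) f) memvD // memvZ.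
have u0 : z + f != 0.
  apply: contra_neq (oner_neq0 R) => u0.
  have := congr1 (@qRe R) (hermDr z z f).
  by rewrite u0 herm0r qRe0 herm_unit // hzf qReD qReZ hab qRe1 mulr0 addr0 => ->.
apply: linked_trans u0 (linked_plane oP xP uP) (linked_plane oQ uQ zQ).
Qed.

Lemma linked_real y y' (D : R) : y != 0 -> y' != 0 -> herm y y' = D%:A -> 0 < D ->
  t2 * (sqnorm y * sqnorm y') <= D ^+ 2 -> linked W y y'.
Proof.
move=> y0 y'0 hyy D0 ht.
have [s s0 hs] := sqnorm_sqrt y0; have [s' s'0 hs'] := sqnorm_sqrt y'0.
rewrite -(scalerKV (lt0r_neq0 s0) y) -(scalerKV (lt0r_neq0 s'0) y'); apply: linked_scale.
apply: (linked_unit_real (rho := s^-1 * s'^-1 * D)).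
- exact: sqnorm_unitZ hs (lt0r_neq0 s0).
- exact: sqnorm_unitZ hs' (lt0r_neq0 s'0).
- by rewrite hermZl hermZr hyy !scalerA.
- by rewrite !mulr_gt0 ?invr_gt0.
have -> : (s^-1 * s'^-1 * D) ^+ 2 = D ^+ 2 / (s ^+ 2 * s' ^+ 2).
  by field; rewrite !lt0r_neq0.
by rewrite ler_pdivlMr ?mulr_gt0 ?exprn_gt0 // -hs -hs'.
Qed.

Hypothesis ht1 : t2 < 1.

Lemma exists_chain_length : exists2 m : nat, (4 <= m)%N & 16 <= (1 - t2) * m%:R.
Proof.
have t1 : 0 < 1 - t2 by rewrite subr_gt0.
have /archi_boundP hB : 0 <= 16 / (1 - t2) by rewrite divr_ge0 // ltW.
exists (Num.Def.archi_bound (16 / (1 - t2)) + 4)%N; first exact: leq_addl.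
have h16 : 16 / (1 - t2) * (1 - t2) = 16 by rewrite mulfVK ?lt0r_neq0.
rewrite natrD; set B := _%:R in hB *; nra.
Qed.

(* The segment from [x] to [e] is cut into [m] steps, short enough for [linked_real]. *)
Lemma linked_orthonormal x e :
  sqnorm x = 1 -> sqnorm e = 1 -> herm x e = 0 -> linked W x e.
Proof.
move=> x1 e1 hxe; have [m m4 hm] := exists_chain_length.
have gram p q p' q' : herm (p *: x + q *: e) (p' *: x + q' *: e) = (p * p' + q * q')%:A.
  rewrite !hermDl !hermDr !hermZl !hermZr !herm_unit // hxe (herm_sym0 hxe).
  by rewrite !scaler0 addr0 add0r !scalerA -scalerDl.
have norm p q : sqnorm (p *: x + q *: e) = p ^+ 2 + q ^+ 2.
  by rewrite sqnormE_herm gram qRe_alg !expr2.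
pose y k : V := (m - k)%:R *: x + k%:R *: e.
have m0 : (0 < m)%N by lia.
have m4R : 4 <= m%:R :> R by rewrite ler_nat.
have y0 k : (0 < k)%N -> y k != 0.
  by move=> k0; rewrite -sqnorm_gt0 norm ltr_pwDr ?sqr_ge0 // exprn_gt0 // ltr0n.
have step k : (k < m)%N -> linked W (y k) (y k.+1).
  move=> km; have p1 : 1 <= (m - k)%:R :> R by rewrite ler1n subn_gt0.
  have hM : (m - k)%:R + k%:R = m%:R :> R by rewrite -natrD subnK // ltnW.
  have [hD hbound] :=
    chain_step_bound (qnorm_ge0 tau) p1 (ler0n _ k) hM m4R hm.
  have hm1 : (m - k.+1)%:R = (m - k)%:R - 1 :> R.
    by rewrite !natrB ?(ltnW km) // -addn1 natrD opprD addrA.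
  have hk1 : k.+1%:R = k%:R + 1 :> R by rewrite -addn1 natrD.
  apply: (linked_real (D := (m - k)%:R * ((m - k)%:R - 1) + k%:R * (k%:R + 1))) => //.
  - by rewrite -sqnorm_gt0 norm ltr_pwDl ?sqr_ge0 // exprn_gt0 // ltr0n subn_gt0.
  - exact: y0.
  - by rewrite gram hm1 hk1.
  by rewrite !norm hm1 hk1.
have := linked_path m0 (fun k hk => y0 k (andP hk).1) step.
rewrite /y subn0 subnn !scale0r addr0 add0r => /(linked_scale m%:R^-1 m%:R^-1).
by rewrite !scalerA mulVf ?pnatr_eq0 -?lt0n // !scale1r.
Qed.

Lemma linked_orthogonal x e : x != 0 -> e != 0 -> herm x e = 0 -> linked W x e.
Proof.
move=> x0 e0 hxe; have [s s0 hs] := sqnorm_sqrt x0; have [s' s'0 hs'] := sqnorm_sqrt e0.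
rewrite -(scalerKV (lt0r_neq0 s0) x) -(scalerKV (lt0r_neq0 s'0) e); apply: linked_scale.
apply: linked_orthonormal.
- exact: sqnorm_unitZ hs (lt0r_neq0 s0).
- exact: sqnorm_unitZ hs' (lt0r_neq0 s'0).
by rewrite hermZl hermZr hxe !scaler0.
Qed.

Lemma linked_nonzero x y : x != 0 -> y != 0 -> linked W x y.
Proof.
move=> x0 y0; have [e [e1 hxe hye]] := exists_unit_orthogonal x y hn.
have e0 : e != 0 by rewrite -sqnorm_gt0 e1.
by apply: (linked_trans e0); apply: linked_orthogonal => //; apply: herm_sym0.
Qed.

End Core.

Section RealPlane.
Variables (R : realType) (n : nat) (W : {vspace 'M[R]_(n, 4)}).
Local Notation V := 'M[R]_(n, 4).
Implicit Types (a b v : V).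

Lemma dim2_basis :
  \dim W = 2%N -> exists v1 v2, W = <<[:: v1; v2]>>%VS /\ free [:: v1; v2].
Proof.
move=> hW; have /andP[/eqP hspan hfree] := vbasisP W.
have : size (vbasis W) = 2%N by rewrite size_tuple hW.
move: hspan hfree; case: (tval (vbasis W)) => [|v1 [|v2 [|? ?]]] // hspan hfree _.
by exists v1, v2.
Qed.

(* Gram--Schmidt for the real inner product [qRe (herm _ _)]. *)
Lemma plane_orthonormal_basis : \dim W = 2%N -> exists a b,
  [/\ a \in W, b \in W, sqnorm a = 1, sqnorm b = 1 & qRe (herm a b) = 0] /\
  (W <= <<[:: a; b]>>)%VS.
Proof.
move=> /dim2_basis[v1 [v2 [->]]].
rewrite free_cons seq1_free span_seq1 => /andP[v1_notin v20].
have [s2 s20 hs2] := sqnorm_sqrt v20; set a := s2^-1 *: v2.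
have a1 : sqnorm a = 1 := sqnorm_unitZ hs2 (lt0r_neq0 s20).
set k := qRe (herm a v1); have b'0 : v1 - k *: a != 0.
  apply: contra v1_notin; rewrite subr_eq0 => /eqP->.
  by rewrite memvZ // memvZ // memv_line.
have [s1 s10 hs1] := sqnorm_sqrt b'0; set b := s1^-1 *: (v1 - k *: a).
have v1E : v1 = s1 *: b + k *: a by rewrite scalerKV ?lt0r_neq0 // subrK.
have v2E : v2 = s2 *: a by rewrite scalerKV ?lt0r_neq0.
have inspan v : v \in [:: a; b] -> v \in <<[:: a; b]>>%VS by apply: memv_span.
exists a, b; split; last first.
  apply/span_subvP => v; rewrite !inE => /orP[]/eqP->.
    by rewrite v1E memvD // memvZ // inspan // !inE eqxx ?orbT.
  by rewrite v2E memvZ // inspan // !inE eqxx.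
split.
- by rewrite memvZ // memv_span // !inE eqxx orbT.
- by rewrite memvZ // memvB ?memvZ // memv_span // !inE eqxx ?orbT.
- exact: a1.
- exact: sqnorm_unitZ hs1 (lt0r_neq0 s10).
by rewrite hermZr hermBr hermZr herm_unit // qReZ qReB qReZ qRe1 mulr1 subrr mulr0.
Qed.

(* Equality in Cauchy--Schwarz forces [b = a <a, b>]. *)
Lemma in_quat_line_of_herm a b : sqnorm a = 1 -> sqnorm b = 1 ->
  (W <= <<[:: a; b]>>)%VS -> 1 <= qnorm (herm a b) -> in_quat_line W.
Proof.
move=> a1 b1 hsub ht; have bE : b = rsc a (herm a b).
  apply/eqP; rewrite -subr_eq0 -sqnorm_eq0 eq_le sqnorm_ge0 andbT.
  by rewrite sqnorm_sub_rsc // b1 subr_le0.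
exists a; split; first by rewrite -sqnorm_gt0 a1.
move=> w /(subvP hsub); rewrite span_cons span_seq1.
move=> /memv_addP[_ /vlineP[k1 ->] [_ /vlineP[k2 ->] ->]].
by exists (k1%:A + k2 *: herm a b); rewrite rscDr rsc_alg rscZr -bE.
Qed.

End RealPlane.

Theorem proposition11p9 (R : realType) (n : nat) (W : {vspace 'M[R]_(n, 4)}) :
  (3 <= n)%N -> real_plane W -> ~ in_quat_line W ->
  transitivity_property (fun W' => in_SpSp1_orbit W W').
Proof.
move=> hn /plane_orthonormal_basis[a [b [[aW bW a1 b1 hab] hsub]]] hW.
have ht : qnorm (herm a b) < 1.
  by rewrite ltNge; apply/negP => /(in_quat_line_of_herm a1 b1 hsub).
have a0 : a != 0 by rewrite -sqnorm_gt0 a1.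
have linked_nz := linked_nonzero hn aW bW a1 b1 hab ht.
move=> x y; change (linked W x y).
have [->|x0] := eqVneq x 0; have [->|y0] := eqVneq y 0.
- exact: linked_0l (linked_0r (linked_nz a a a0 a0)).
- exact: linked_0l (linked_nz a y a0 y0).
- exact: linked_0r (linked_nz x a x0 a0).
- exact: linked_nz.
Qed.
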